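(* Let $u:\mathbb T_n^d\to(0,1)$, $\mu=\bigotimes_{x\in\mathbb T^d_n}\mathrm{Bern}(u_x)$ on $\Omega_n=\{0,1\}^{\mathbb T_n^d}$, let $f:\Omega_n\to[0,\infty)$ be a density with respect to $\mu$, let $x,y\in\mathbb T_n^d$, and let $h:\Omega_n\to\mathbb R$ satisfy $h(\eta^{x,y})=h(\eta)$ for all $\eta$. Then \[ \int h(\omega_y-\omega_x)f\,d\mu=\int h\,s_{x,y}\,\nabla_{x,y}f\,d\mu-(u_y-u_x)\int h\,\omega_x\omega_y f\,d\mu, \] where $s_{x,y}=\dfrac{\eta_x(1-\eta_y)}{u_x(1-u_y)}$.
   Context: $\mathbb T_n^d=\mathbb Z^d/n\mathbb Z^d$; $\eta^{x,y}$ is the configuration obtained from $\eta$ by exchanging the values $\eta_x,\eta_y$; $\nabla_{x,y}f(\eta)=f(\eta^{x,y})-f(\eta)$; $\omega_x=(\eta_x-u_x)/(u_x(1-u_x))$; a density means $\int f\,d\mu=1$. *)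

From HB Require Import structures.
From mathcomp Require Import all_boot all_order all_algebra.
From mathcomp Require Import reals.
Set Implicit Arguments. Unset Strict Implicit. Unset Printing Implicit Defensive.
Import Order.TTheory GRing.Theory Num.Theory.
Local Open Scope ring_scope.

(* The discrete torus T_n^d = Z^d / n Z^d, represented as functions
   'I_d -> 'I_n (coordinates modulo n). *)
Definition torus (n d : nat) : finType := {ffun 'I_d -> 'I_n}.

Definition config (n d : nat) : finType := {ffun torus n d -> bool}.

Definition occ {R : realType} {n d} (eta : config n d) (z : torus n d) : R :=
  (eta z)%:R.

Definition swap {n d} (x y : torus n d) (eta : config n d) : config n d :=
  [ffun z => if z == x then eta y else if z == y then eta x else eta z].

Definition bern_prod {R : realType} {n d} (u : torus n d -> R) (eta : config n d) : R :=
  \prod_(z : torus n d) (if eta z then u z else 1 - u z).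

Definition integ {R : realType} {n d} (u : torus n d -> R)
  (F : config n d -> R) : R :=
  \sum_(eta : config n d) F eta * bern_prod u eta.

Definition nabla {R : realType} {n d} (x y : torus n d)
  (f : config n d -> R) (eta : config n d) : R :=
  f (swap x y eta) - f eta.

Definition omega {R : realType} {n d} (u : torus n d -> R) (z : torus n d)
  (eta : config n d) : R :=
  (occ eta z - u z) / (u z * (1 - u z)).

Definition s_xy {R : realType} {n d} (u : torus n d -> R) (x y : torus n d)
  (eta : config n d) : R :=
  occ eta x * (1 - occ eta y) / (u x * (1 - u y)).

From HB Require Import structures.
From mathcomp Require Import all_boot all_order all_algebra.
From mathcomp Require Import reals.
From mathcomp Require Import ring.
Set Implicit Arguments. Unset Strict Implicit. Unset Printing Implicit Defensive.
Import Order.TTheory GRing.Theory Num.Theory.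
Local Open Scope ring_scope.

(* The exchange eta |-> eta^{x,y} is an involution, and the rate s_{x,y} is
   in detailed balance with its reverse: s_{x,y}(eta^{x,y}) mu(eta^{x,y}) =
   s_{y,x}(eta) mu(eta).  Changing variables in the sum defining the integral
   therefore gives int h s_{x,y} f(eta^{x,y}) dmu = int h s_{y,x} f dmu for
   swap-invariant h.  The theorem then follows from the pointwise identity
   omega_y - omega_x = s_{y,x} - s_{x,y} - (u_y - u_x) omega_x omega_y. *)

Section Exchange.
Variables (n d : nat).
Implicit Types (x y z : torus n d) (eta : config n d).

Lemma swapE x y eta z :
  swap x y eta z = if z == x then eta y else if z == y then eta x else eta z.
Proof. by rewrite ffunE. Qed.

Lemma swapK x y : involutive (swap x y).
Proof.
move=> eta; apply/ffunP=> z; rewrite !swapE.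
have [->|zx] := eqVneq z x; first by rewrite eqxx; case: eqVneq => [->|].
by have [->|zy] := eqVneq z y; rewrite ?eqxx //; case: eqVneq => [->|].
Qed.

Lemma swap_id x eta : swap x x eta = eta.
Proof. by apply/ffunP=> z; rewrite swapE; case: eqVneq => [->|]. Qed.

End Exchange.

Section BernoulliProduct.
Variables (R : realType) (n d : nat) (u : torus n d -> R).
Implicit Types (x y z : torus n d) (eta : config n d) (F G : config n d -> R).

Lemma eq_integ F G : F =1 G -> integ u F = integ u G.
Proof. by move=> FG; apply: eq_bigr => eta _; rewrite FG. Qed.

Lemma integB F G : integ u (fun eta => F eta - G eta) = integ u F - integ u G.
Proof. by rewrite -sumrB; apply: eq_bigr => eta _; rewrite mulrBl. Qed.

Lemma integZ c F : integ u (fun eta => c * F eta) = c * integ u F.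
Proof. by rewrite mulr_sumr; apply: eq_bigr => eta _; rewrite mulrA. Qed.

Definition bern_mass z (b : bool) : R := if b then u z else 1 - u z.

Lemma bern_prodD2 x y eta : x != y ->
  bern_prod u eta = bern_mass x (eta x) * bern_mass y (eta y) *
    \prod_(z | (z != x) && (z != y)) bern_mass z (eta z).
Proof.
move=> xy; rewrite /bern_prod (bigD1 x) //= (bigD1 y) 1?eq_sym //= mulrA.
by congr (_ * _); apply: eq_bigl => z; rewrite andbC.
Qed.

Lemma bern_prod_swap x y eta : x != y ->
  bern_prod u (swap x y eta) = bern_mass x (eta y) * bern_mass y (eta x) *
    \prod_(z | (z != x) && (z != y)) bern_mass z (eta z).
Proof.
move=> xy; rewrite (bern_prodD2 (swap x y eta) xy) !swapE !eqxx eq_sym (negbTE xy).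
by congr (_ * _); apply: eq_bigr => z /andP[zx zy]; rewrite swapE (negbTE zx) (negbTE zy).
Qed.

Lemma s_xy_diag x eta : s_xy u x x eta = 0.
Proof. by rewrite /s_xy /occ; case: (eta x); rewrite /= ?subrr ?mulr0 ?mul0r. Qed.

Lemma unit_open_neq0 (a : R) : 0 < a < 1 -> (a != 0) && (1 - a != 0).
Proof. by move=> /andP[a0 a1]; rewrite gt_eqF // subr_eq0 eq_sym lt_eqF. Qed.

Variables (x y : torus n d).
Hypotheses (hux : 0 < u x < 1) (huy : 0 < u y < 1).

Lemma s_xy_detailed_balance eta :
  s_xy u x y (swap x y eta) * bern_prod u (swap x y eta) =
  s_xy u y x eta * bern_prod u eta.
Proof.
have [<-|xy] := eqVneq x y; first by rewrite swap_id !s_xy_diag !mul0r.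
have /andP[ux0 ux1] := unit_open_neq0 hux; have /andP[uy0 uy1] := unit_open_neq0 huy.
rewrite (bern_prod_swap _ xy) (bern_prodD2 _ xy) /s_xy /occ !swapE !eqxx eq_sym (negbTE xy).
by rewrite /bern_mass; case: (eta x); case: (eta y) => /=; field; rewrite ?ux0 ?ux1 ?uy0 ?uy1.
Qed.

Lemma integ_s_xy_swap G :
  integ u (fun eta => s_xy u x y eta * G (swap x y eta)) =
  integ u (fun eta => s_xy u y x eta * G eta).
Proof.
rewrite /integ (reindex_inj (inv_inj (swapK x y))); apply: eq_bigr => eta _.
by rewrite swapK mulrAC s_xy_detailed_balance mulrAC.
Qed.

Lemma omega_subE eta :
  omega u y eta - omega u x eta =
  s_xy u y x eta - s_xy u x y eta - (u y - u x) * (omega u x eta * omega u y eta).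
Proof.
have /andP[ux0 ux1] := unit_open_neq0 hux; have /andP[uy0 uy1] := unit_open_neq0 huy.
rewrite /omega /s_xy /occ; case: (eta x); case: (eta y) => /=;
  by field; rewrite ?ux0 ?ux1 ?uy0 ?uy1.
Qed.

End BernoulliProduct.

Theorem lemmaE1 (R : realType) (n d : nat) (hn : (0 < n)%N)
  (u : torus n d -> R) (hu : forall z, 0 < u z < 1)
  (f : config n d -> R) (hf0 : forall eta, 0 <= f eta)
  (hf1 : integ u f = 1)
  (x y : torus n d)
  (h : config n d -> R) (hh : forall eta, h (swap x y eta) = h eta) :
  integ u (fun eta => h eta * (omega u y eta - omega u x eta) * f eta) =
  integ u (fun eta => h eta * s_xy u x y eta * nabla x y f eta)
  - (u y - u x) * integ u (fun eta => h eta * omega u x eta * omega u y eta * f eta).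
Proof.
have exchange : integ u (fun eta => h eta * s_xy u x y eta * f (swap x y eta)) =
                integ u (fun eta => h eta * s_xy u y x eta * f eta).
  have hf_swap eta : h eta * s_xy u x y eta * f (swap x y eta) =
                     s_xy u x y eta * (h (swap x y eta) * f (swap x y eta)).
    by rewrite hh; ring.
  rewrite (eq_integ u hf_swap) (integ_s_xy_swap (hu x) (hu y) (fun eta => h eta * f eta)).
  by apply: eq_integ => eta; ring.
have -> : integ u (fun eta => h eta * s_xy u x y eta * nabla x y f eta) =
          integ u (fun eta => h eta * s_xy u y x eta * f eta)
          - integ u (fun eta => h eta * s_xy u x y eta * f eta).
  by rewrite -exchange -integB; apply: eq_integ => eta; rewrite /nabla mulrBr.
rewrite -integB -integZ -integB; apply: eq_integ => eta.
by rewrite (omega_subE (hu x) (hu y)); ring.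
Qed.
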